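(* For any constants $\beta_1, \beta_2 \in [0,1)$ with $\beta_1 < \sqrt{\beta_2}$, there exists a one-dimensional stochastic convex optimization problem — a compact convex set $\mathcal{F} \subset \mathbb{R}$ and a distribution over convex (linear) functions $f$ on $\mathcal{F}$ with bounded gradients, with expected objective $F(x) = \mathbb{E}[f(x)]$ having minimizer $x^*$ over $\mathcal{F}$ — such that, for every initial step size $\alpha > 0$, \textsc{Adam} run with parameters $\alpha, \beta_1, \beta_2$ on i.i.d. samples $f_1, f_2, \dots$ from this distribution does not converge to the optimal solution $x^*$.
   Context: \textsc{Adam} (without debiasing) on a closed convex set $\mathcal{F} \subset \mathbb{R}^d$ with loss functions $f_1, f_2, \dots$, initial point $x_1 \in \mathcal{F}$, initial step size $\alpha > 0$ and constants $\beta_1, \beta_2 \in [0,1)$ is defined as follows. Set $m_0 = v_0 = 0 \in \mathbb{R}^d$. For $t = 1, 2, \dots$: $g_t = \nabla f_t(x_t)$; $m_t = \beta_1 m_{t-1} + (1-\beta_1) g_t$; $v_t = \beta_2 v_{t-1} + (1-\beta_2) g_t^2$ (square taken coordinatewise); $V_t = \mathrm{diag}(v_t)$; $\alpha_t = \alpha/\sqrt{t}$; $\hat{x}_{t+1} = x_t - \alpha_t V_t^{-1/2} m_t$; $x_{t+1} = \Pi_{\mathcal{F}, \sqrt{V_t}}(\hat{x}_{t+1})$, where for a positive definite matrix $M$, $\Pi_{\mathcal{F}, M}(y) = \arg\min_{x \in \mathcal{F}} \|M^{1/2}(x-y)\|$. *)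

From Stdlib Require Import Reals List.
Import ListNotations.
Open Scope R_scope.

(* Euclidean projection onto the interval [a,b] (a <= b).  In dimension one
   the weighted projection Pi_{F, sqrt V_t} with V_t > 0 a positive scalar
   coincides with this Euclidean projection. *)
Definition clamp (a b y : R) : R := Rmax a (Rmin b y).

(* Adam state after step t: (x_{t+1}, m_t, v_t). The initial state is
   (x_1, m_0, v_0) = (x_1, 0, 0). *)
Definition adam_state : Type := (R * R * R)%type.
Definition st_x (s : adam_state) : R := fst (fst s).
Definition st_m (s : adam_state) : R := snd (fst s).
Definition st_v (s : adam_state) : R := snd s.

(* One Adam step (without debiasing) in dimension 1 on the feasible set
   [a,b]: at time t = k+1, given state (x_t, m_{t-1}, v_{t-1}) and the
   gradient g_t = f_t'(x_t), produce (x_{t+1}, m_t, v_t). *)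
Definition adam_step (alpha beta1 beta2 a b : R) (k : nat)
    (s : adam_state) (g : R) : adam_state :=
  let m := beta1 * st_m s + (1 - beta1) * g in
  let v := beta2 * st_v s + (1 - beta2) * g ^ 2 in
  let alpha_t := alpha / sqrt (INR (S k)) in
  let xhat := st_x s - alpha_t * m / sqrt v in
  (clamp a b xhat, m, v).

(* A finitely supported distribution over linear loss functions
   f(x) = g * x on R, given as a list of (probability, gradient) atoms. *)
Definition distribution : Type := list (R * R).

Definition is_distribution (D : distribution) : Prop :=
  Forall (fun pg => 0 <= fst pg) D /\ fold_right (fun pg acc => fst pg + acc) 0 D = 1.

Definition objective (D : distribution) (x : R) : R :=
  fold_right (fun pg acc => fst pg * (snd pg * x) + acc) 0 D.

(* Expectation of phi(state) after n further Adam steps, starting from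
   state s at time k, where each step uses a fresh independent sample
   from D (i.i.d. sampling). *)
Fixpoint adam_expect (alpha beta1 beta2 a b : R) (D : distribution)
    (n k : nat) (s : adam_state) (phi : adam_state -> R) : R :=
  match n with
  | O => phi s
  | S n' =>
      fold_right
        (fun pg acc =>
           fst pg * adam_expect alpha beta1 beta2 a b D n' (S k)
                      (adam_step alpha beta1 beta2 a b k s (snd pg)) phi
           + acc) 0 D
  end.

(* E[ phi(x_{n+1}) ] for Adam started at x_1. *)
Definition adam_iter_expect (alpha beta1 beta2 a b x1 : R) (D : distribution)
    (n : nat) (phi : R -> R) : R :=
  adam_expect alpha beta1 beta2 a b D n 0 (x1, 0, 0) (fun s => phi (st_x s)).

From Stdlib Require Import Reals List Lra Lia.
Import ListNotations.
Open Scope R_scope.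

(* The instance: F = [0,1], x_1 = 1, and the loss is f(x) = C x with
   probability 2/(C+2) and f(x) = -x with probability C/(C+2), so that
   E f(x) = C/(C+2) x has the unique minimiser x* = 0 on [0,1].  The
   gradient C >= 1 depends only on beta1 and beta2.

   The proof is a Lyapunov argument.  Every reachable state (x, m, v)
   satisfies |m| <= Rm sqrt v and, after one step, 1 - beta2 <= v <= C^2.
   On such states a bounded potential H(m, v) makes the drift
   -m'/sqrt v' + H(m', v') - H(m, v) of one step at least gain > 0 for the
   gradient -1 and at least -loss for the gradient C; C is chosen so that
   the expected drift eps is positive.  As x' = clamp(x - alpha_t m'/sqrt v'),
   the quantity Phi_t = x + alpha_t H then satisfies
     E Phi_{t+1} >= E Phi_t + alpha_t eps - 2 Rm alpha_t E x_t
                    - (alpha_t - alpha_{t+1}) Bpot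
   once alpha_t Rm <= 1/2.  If E|x_t - 0| tended to 0, the increments
   alpha_t eps / 2 ~ 1/sqrt t would make E Phi_t unbounded, whereas
   |Phi_t| <= 1 + alpha Bpot. *)

Definition expect_grad (D : distribution) (F : R -> R) : R :=
  fold_right (fun pg acc => fst pg * F (snd pg) + acc) 0 D.

Lemma expect_grad_add D F G :
  expect_grad D (fun g => F g + G g) = expect_grad D F + expect_grad D G.
Proof. induction D as [|[p g] D IH]; simpl; [lra|]. rewrite IH. ring. Qed.

Lemma expect_grad_scale D c F :
  expect_grad D (fun g => c * F g) = c * expect_grad D F.
Proof. induction D as [|[p g] D IH]; simpl; [lra|]. rewrite IH. ring. Qed.

Lemma expect_grad_const D c : is_distribution D -> expect_grad D (fun _ => c) = c.
Proof.
  intros [_ Hmass].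
  transitivity (c * fold_right (fun pg acc => fst pg + acc) 0 D); [|rewrite Hmass; ring].
  clear Hmass. induction D as [|[p g] D IH]; simpl; [lra|]. rewrite IH. ring.
Qed.

Lemma expect_grad_ext D F G :
  (forall pg, In pg D -> F (snd pg) = G (snd pg)) -> expect_grad D F = expect_grad D G.
Proof.
  induction D as [|[p g] D IH]; simpl; intros HFG; [lra|].
  rewrite (HFG (p, g) (or_introl eq_refl) : F g = G g), IH; auto.
Qed.

Lemma expect_grad_mono D F G : Forall (fun pg => 0 <= fst pg) D ->
  (forall pg, In pg D -> F (snd pg) <= G (snd pg)) -> expect_grad D F <= expect_grad D G.
Proof.
  induction D as [|[p g] D IH]; simpl; intros Hpos HFG; [lra|].
  inversion Hpos; subst.
  apply Rplus_le_compat; [apply Rmult_le_compat_l|apply IH]; auto.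
  apply (HFG (p, g)); auto.
Qed.

Section IteratedExpectation.
Variables (alpha beta1 beta2 a b : R) (D : distribution).
Local Notation E := (adam_expect alpha beta1 beta2 a b D).
Local Notation step := (adam_step alpha beta1 beta2 a b).

Lemma adam_expect_succ n k s phi :
  E (S n) k s phi = expect_grad D (fun g => E n (S k) (step k s g) phi).
Proof. reflexivity. Qed.

Lemma adam_expect_add n : forall k s f h,
  E n k s (fun st => f st + h st) = E n k s f + E n k s h.
Proof.
  induction n; intros; [reflexivity|]. rewrite !adam_expect_succ, <- expect_grad_add.
  apply expect_grad_ext. intros. apply IHn.
Qed.

Lemma adam_expect_scale n : forall k s c f,
  E n k s (fun st => c * f st) = c * E n k s f.
Proof.
  induction n; intros; [reflexivity|]. rewrite !adam_expect_succ, <- expect_grad_scale.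
  apply expect_grad_ext. intros. apply IHn.
Qed.

Lemma adam_expect_const n : is_distribution D -> forall k s c, E n k s (fun _ => c) = c.
Proof.
  intros HD. induction n; intros; [reflexivity|]. rewrite adam_expect_succ.
  rewrite (expect_grad_ext D _ (fun _ => c)); [apply expect_grad_const; auto|].
  intros. apply IHn.
Qed.

Lemma adam_expect_last_step n : forall k s phi,
  E (S n) k s phi = E n k s (fun st => E 1 (k + n) st phi).
Proof.
  induction n; intros.
  - simpl. rewrite Nat.add_0_r. reflexivity.
  - rewrite adam_expect_succ, (adam_expect_succ n). apply expect_grad_ext. intros.
    rewrite IHn. replace (S k + n)%nat with (k + S n)%nat by lia. reflexivity.
Qed.

Lemma adam_expect_mono_on (P : adam_state -> Prop) :
  Forall (fun pg => 0 <= fst pg) D ->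
  (forall k st pg, In pg D -> P st -> P (step k st (snd pg))) ->
  forall n k s f h, P s -> (forall st, P st -> f st <= h st) -> E n k s f <= E n k s h.
Proof.
  intros Hpos HP n. induction n; intros k s f h Ps Hfh; [simpl; auto|].
  rewrite !adam_expect_succ. apply expect_grad_mono; auto.
Qed.

End IteratedExpectation.

Lemma adam_step_x alpha beta1 beta2 a b k st g :
  st_x (adam_step alpha beta1 beta2 a b k st g) =
  clamp a b (st_x st - alpha / sqrt (INR (S k)) * (beta1 * st_m st + (1 - beta1) * g) /
                       sqrt (beta2 * st_v st + (1 - beta2) * g ^ 2)).
Proof. reflexivity. Qed.

Lemma adam_step_m alpha beta1 beta2 a b k st g :
  st_m (adam_step alpha beta1 beta2 a b k st g) = beta1 * st_m st + (1 - beta1) * g.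
Proof. reflexivity. Qed.

Lemma adam_step_v alpha beta1 beta2 a b k st g :
  st_v (adam_step alpha beta1 beta2 a b k st g) = beta2 * st_v st + (1 - beta2) * g ^ 2.
Proof. reflexivity. Qed.

Lemma clamp01 y : 0 <= clamp 0 1 y <= 1.
Proof. unfold clamp. split; [apply Rmax_l|apply Rmax_lub; [lra|apply Rmin_l]]. Qed.

Lemma ln_le_sub1 x : 0 < x -> ln x <= x - 1.
Proof. intros Hx. pose proof (exp_ineq1_le (ln x)). rewrite exp_ln in *; lra. Qed.

Lemma ln_le_mono x y : 0 < x -> x <= y -> ln x <= ln y.
Proof. intros Hx Hxy. destruct (Req_dec x y) as [->|]; [lra|]. left; apply ln_increasing; lra. Qed.

Lemma ln_nonneg x : 1 <= x -> 0 <= ln x.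
Proof. intros. rewrite <- ln_1. apply ln_le_mono; lra. Qed.

Lemma ln_sub_lower x y : 0 < x -> 0 < y -> (x - y) / x <= ln x - ln y.
Proof.
  intros Hx Hy. assert (Hyx : 0 < y / x) by (apply Rdiv_lt_0_compat; auto).
  pose proof (ln_le_sub1 _ Hyx) as Hln. unfold Rdiv in Hln.
  rewrite ln_mult, ln_Rinv in Hln; auto; [|apply Rinv_0_lt_compat; auto].
  replace ((x - y) / x) with (1 - y * / x) by (field; lra). lra.
Qed.

Lemma Rabs_le_between m r : Rabs m <= r -> - r <= m <= r.
Proof. intros. pose proof (Rle_abs m). pose proof (Rle_abs (- m)). rewrite Rabs_Ropp in *. lra. Qed.

Lemma le_of_sqr_le x y : 0 <= y -> x * x <= y * y -> x <= y.
Proof. intros Hy Hxy. apply Rsqr_incr_0_var; auto. Qed.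

Lemma clamp01_lower x a r R : 0 <= x <= 1 -> Rabs r <= R -> 0 <= a -> a * R <= 1/2 ->
  x - a * r - 2 * R * a * x <= clamp 0 1 (x - a * r).
Proof.
  intros Hx Hr Ha HaR. apply Rabs_le_between in Hr.
  unfold clamp. eapply Rle_trans; [|apply Rmax_r].
  assert (- (a * R) <= a * r <= a * R) by (split; nra).
  destruct (Rle_lt_dec (x - a * r) 1).
  - rewrite Rmin_right by lra. nra.
  - rewrite Rmin_left by lra. nra.
Qed.

(* The next three inequalities bound the one-step change of the potential
   used below.  There w = sqrt v and w' = sqrt v' are the old and new
   second-moment roots, |m| <= r w is the invariant on the momentum, and
   c, r, lam, mu >= 0 are the weights of the potential. *)

(* Gradient -1 and v >= 1: the logarithmic term pays for the momentum
   term and leaves a gain of at least min(1/2, ln(4/(1+3b))/2). *)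
Lemma minus_step_gain_large (c r b m v w w' : R) :
  0 < b < 1 -> 0 <= c -> 0 <= r -> 1 <= v -> 0 < w -> 0 < w' -> w * w = v ->
  w' * w' = b * v + (1 - b) -> Rabs m <= r * w ->
  1 / w' + c * m * (1 / w - 1 / w') + (c * r / b + 1) / 2 * (ln v - ln (b * v + (1 - b)))
  >= Rmin (1/2) (ln (4 / (1 + 3 * b)) / 2).
Proof.
  intros Hb Hc Hr Hv Hw Hw' Ew Ew' Hm. apply Rabs_le_between in Hm.
  set (v' := b * v + (1 - b)) in *.
  assert (Hv' : 1 <= v' <= v) by (unfold v'; split; nra).
  assert (Hww : w' <= w) by nra.
  assert (Hdl : 0 <= ln v - ln v') by (pose proof (ln_le_mono v' v); lra).
  assert (Hmom : c * m * (1 / w - 1 / w') >= - (c * r) * (w / w' - 1)).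
  { assert (Hd : 0 <= 1 / w' - 1 / w).
    { assert (/ w <= / w') by (apply Rinv_le_contravar; lra). unfold Rdiv; lra. }
    assert (m * (1 / w - 1 / w') >= - (r * w) * (1 / w' - 1 / w)) by nra.
    replace (- (r * w) * (1 / w' - 1 / w)) with (- r * (w / w' - 1)) in * by (field; lra).
    nra. }
  (* w/w' - 1 <= (v/v' - 1)/2 <= (ln v - ln v')/(2b) *)
  assert (Hratio : w / w' - 1 <= (ln v - ln v') / (2 * b)).
  { assert (Hsq : w / w' - 1 <= (v / v' - 1) / 2).
    { replace (v / v') with ((w / w') * (w / w')) by (rewrite <- Ew, <- Ew'; field; lra).
      pose proof (pow2_ge_0 (w / w' - 1)). nra. }
    assert (Hrel : v / v' - 1 <= (v - v') / v / b).
    { replace (v / v' - 1) with ((v - v') / v') by (field; lra).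
      replace ((v - v') / v / b) with ((v - v') / (b * v)) by (field; lra).
      unfold Rdiv. apply Rmult_le_compat_l; [lra|].
      apply Rinv_le_contravar; [nra|unfold v'; lra]. }
    pose proof (ln_sub_lower v v' ltac:(lra) ltac:(lra)) as Hl.
    assert ((v - v') / v / b <= (ln v - ln v') / b).
    { unfold Rdiv at 2 3. apply Rmult_le_compat_r; [left; apply Rinv_0_lt_compat|]; lra. }
    replace ((ln v - ln v') / (2 * b)) with ((ln v - ln v') / b / 2) by (field; lra). lra. }
  assert (Hsum : 1 / w' + c * m * (1 / w - 1 / w') + (c * r / b + 1) / 2 * (ln v - ln v')
                 >= 1 / w' + (ln v - ln v') / 2).
  { assert (c * r * (w / w' - 1) <= c * r * ((ln v - ln v') / (2 * b)))
      by (apply Rmult_le_compat_l; nra).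
    replace ((c * r / b + 1) / 2 * (ln v - ln v'))
      with (c * r * ((ln v - ln v') / (2 * b)) + (ln v - ln v') / 2) by (field; lra).
    lra. }
  pose proof (Rmin_l (1/2) (ln (4 / (1 + 3 * b)) / 2)).
  pose proof (Rmin_r (1/2) (ln (4 / (1 + 3 * b)) / 2)).
  destruct (Rle_lt_dec v 4) as [H4|H4].
  - (* v <= 4: then w' <= 2 and 1/w' alone is >= 1/2 *)
    assert (1/2 <= 1 / w').
    { unfold Rdiv. rewrite !Rmult_1_l. apply Rinv_le_contravar; nra. }
    lra.
  - (* v > 4: then v/v' >= 4/(1+3b) *)
    assert (ln (4 / (1 + 3 * b)) <= ln v - ln v').
    { replace (ln v - ln v') with (ln (v / v')).
      2:{ unfold Rdiv. rewrite ln_mult, ln_Rinv; try lra. apply Rinv_0_lt_compat; lra. }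
      apply ln_le_mono; [apply Rdiv_lt_0_compat; lra|].
      apply Rmult_le_reg_r with (v' * (1 + 3 * b)); [nra|].
      replace (4 / (1 + 3 * b) * (v' * (1 + 3 * b))) with (4 * v') by (field; lra).
      replace (v / v' * (v' * (1 + 3 * b))) with (v * (1 + 3 * b)) by (field; lra).
      unfold v'. nra. }
    assert (0 < 1 / w') by (apply Rdiv_lt_0_compat; lra).
    lra.
Qed.

(* Gradient -1 and v < 1: the term mu * v pays for the momentum term and
   the step itself gains 1/w' >= 1. *)
Lemma minus_step_gain_small (c r b m v w w' : R) :
  0 < b < 1 -> 0 <= c -> 0 <= r -> 1 - b <= v < 1 -> 0 < w -> 0 < w' -> w * w = v ->
  w' * w' = b * v + (1 - b) -> Rabs m <= r * w ->
  1 / w' + c * m * (1 / w - 1 / w') + c * r / (1 - b) * (b * v + (1 - b) - v) >= 1.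
Proof.
  intros Hb Hc Hr Hv Hw Hw' Ew Ew' Hm. apply Rabs_le_between in Hm.
  set (v' := b * v + (1 - b)) in *.
  assert (Hv' : v <= v' < 1) by (unfold v'; split; nra).
  assert (Hww : w <= w' < 1) by (split; nra).
  assert (1 <= 1 / w').
  { unfold Rdiv. rewrite Rmult_1_l, <- Rinv_1. apply Rinv_le_contravar; lra. }
  assert (Hd : 0 <= 1 / w - 1 / w').
  { assert (/ w' <= / w) by (apply Rinv_le_contravar; lra). unfold Rdiv; lra. }
  assert (Hmom : m * (1 / w - 1 / w') >= - r * (1 - w / w')).
  { replace (- r * (1 - w / w')) with (- (r * w) * (1 / w - 1 / w')) by (field; lra). nra. }
  (* 1 - w/w' <= 1 - v/v' <= (v' - v)/(1 - b) *)
  assert (Hratio : 1 - w / w' <= (v' - v) / (1 - b)).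
  { assert (0 <= w / w' <= 1).
    { split; [apply Rmult_le_pos; [lra|left; apply Rinv_0_lt_compat; lra]|].
      apply Rmult_le_reg_r with w'; auto. replace (w / w' * w') with w by (field; lra). lra. }
    assert (1 - w / w' <= 1 - v / v').
    { replace (v / v') with ((w / w') * (w / w')) by (rewrite <- Ew, <- Ew'; field; lra). nra. }
    replace (1 - v / v') with ((v' - v) / v') in * by (field; lra).
    assert ((v' - v) / v' <= (v' - v) / (1 - b)); [|lra].
    unfold Rdiv. apply Rmult_le_compat_l; [lra|]. apply Rinv_le_contravar; [lra|unfold v'; nra]. }
  assert (c * (r * (1 - w / w')) <= c * r * ((v' - v) / (1 - b))).
  { rewrite <- Rmult_assoc. apply Rmult_le_compat_l; nra. }
  replace (c * r / (1 - b) * (v' - v)) with (c * r * ((v' - v) / (1 - b))) by (field; lra).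
  nra.
Qed.

Lemma C_step_loss (c r lam mu b m v w w' C : R) :
  0 < b < 1 -> 0 <= c -> 0 <= r -> 0 <= lam -> 0 <= mu -> 1 <= C ->
  1 - b <= v <= C * C -> 0 < w -> 0 < w' -> w * w = v ->
  w' * w' = b * v + (1 - b) * C ^ 2 -> Rabs m <= r * w ->
  - C / w' + c * m * (1 / w - 1 / w')
  - lam / 2 * (ln (Rmax (b * v + (1 - b) * C ^ 2) 1) - ln (Rmax v 1))
  + mu * (Rmin (b * v + (1 - b) * C ^ 2) 1 - Rmin v 1)
  >= - (1 / sqrt (1 - b) + c * r + lam * ln C).
Proof.
  intros Hb Hc Hr Hl Hmu HC Hv Hw Hw' Ew Ew' Hm. apply Rabs_le_between in Hm.
  set (v' := b * v + (1 - b) * C ^ 2) in *.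
  assert (Hv' : v <= v' <= C * C) by (unfold v'; split; nra).
  assert (Hww : w <= w') by nra.
  assert (Hs : 0 < sqrt (1 - b)) by (apply sqrt_lt_R0; lra).
  (* the step term: C / w' <= 1 / sqrt (1 - b) since w'^2 >= (1 - b) C^2 *)
  assert (Hstep : C / w' <= 1 / sqrt (1 - b)).
  { assert (sqrt (1 - b) * C <= w').
    { pose proof (sqrt_sqrt (1 - b)).
      apply le_of_sqr_le; [lra|]. rewrite Ew'. unfold v'. nra. }
    apply Rmult_le_reg_r with (w' * sqrt (1 - b)); [nra|].
    replace (C / w' * (w' * sqrt (1 - b))) with (C * sqrt (1 - b)) by (field; lra).
    replace (1 / sqrt (1 - b) * (w' * sqrt (1 - b))) with w' by (field; lra). nra. }
  (* the momentum term: |m| (1/w - 1/w') <= r w (1/w) = r *)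
  assert (Hmom : c * m * (1 / w - 1 / w') >= - (c * r)).
  { assert (/ w' <= / w) by (apply Rinv_le_contravar; lra).
    assert (0 < / w') by (apply Rinv_0_lt_compat; lra).
    assert (Hd : 0 <= 1 / w - 1 / w' <= 1 / w) by (unfold Rdiv; lra).
    assert (m * (1 / w - 1 / w') >= - (r * w) * (1 / w - 1 / w')) by nra.
    assert (r * w * (1 / w - 1 / w') <= r * w * (1 / w)) by (apply Rmult_le_compat_l; nra).
    replace (r * w * (1 / w)) with r in * by (field; lra). nra. }
  (* the logarithmic term: at most lam ln C since 1 <= max v' 1 <= C^2 *)
  assert (Hlog : lam / 2 * (ln (Rmax v' 1) - ln (Rmax v 1)) <= lam * ln C).
  { assert (ln (Rmax v' 1) <= ln C + ln C).
    { rewrite <- ln_mult by lra. apply ln_le_mono; [pose proof (Rmax_r v' 1); lra|].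
      apply Rmax_lub; nra. }
    assert (0 <= ln (Rmax v 1)) by (apply ln_nonneg, Rmax_r).
    replace (lam * ln C) with (lam / 2 * (2 * ln C)) by field.
    apply Rmult_le_compat_l; lra. }
  assert (Hmin : 0 <= mu * (Rmin v' 1 - Rmin v 1)).
  { apply Rmult_le_pos; auto. pose proof (Rle_min_compat_r v v' 1). lra. }
  unfold Rdiv in *. rewrite <- Ropp_mult_distr_l. lra.
Qed.

(* Summing u_{j+1} >= u_j + c a_j - (a_j - a_{j+1}) B from j = N on, for a
   nonincreasing sequence a: the gains add up to at least M c a_{N+M}
   while the correction terms telescope. *)
Lemma telescope_drift (u a : nat -> R) (c B : R) (N : nat) :
  0 <= c -> (forall j, a (S j) <= a j) ->
  (forall j, (N <= j)%nat -> u (S j) >= u j + c * a j - (a j - a (S j)) * B) ->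
  forall M, u (N + M)%nat >= u N + INR M * c * a (N + M)%nat - (a N - a (N + M)%nat) * B.
Proof.
  intros Hc Hdecr Hstep. induction M as [|M IH].
  - rewrite Nat.add_0_r. simpl. lra.
  - replace (N + S M)%nat with (S (N + M)) by lia.
    pose proof (Hstep (N + M)%nat ltac:(lia)). pose proof (Hdecr (N + M)%nat).
    pose proof (pos_INR M). rewrite S_INR.
    assert (INR M * c * a (S (N + M)) <= INR M * c * a (N + M)%nat)
      by (apply Rmult_le_compat_l; [apply Rmult_le_pos|]; lra).
    nra.
Qed.

Lemma sqrt_growth (K : R) (N : nat) : exists M, K < INR M / sqrt (INR (S (N + M))).
Proof.
  destruct (INR_unbounded (2 * K)) as [n0 Hn0].
  set (n := max (S N) n0). exists (n * n)%nat.
  assert (Hn : INR n0 <= INR n) by (apply le_INR; unfold n; lia).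
  assert (Hn1 : 1 <= INR n) by (change 1 with (INR 1); apply le_INR; unfold n; lia).
  assert (Hsqrt : sqrt (INR (S (N + n * n))) <= 2 * INR n).
  { rewrite <- (sqrt_square (2 * INR n)) by lra. apply sqrt_le_1_alt.
    replace (2 * INR n * (2 * INR n)) with (INR (4 * n * n)) by (rewrite !mult_INR; simpl; ring).
    apply le_INR. unfold n. nia. }
  assert (Hpos : 0 < sqrt (INR (S (N + n * n)))) by (apply sqrt_lt_R0, lt_0_INR; lia).
  rewrite mult_INR.
  apply Rlt_le_trans with (INR n / 2); [lra|].
  apply Rmult_le_reg_r with (2 * sqrt (INR (S (N + n * n)))); [lra|].
  field_simplify; [nra|lra].
Qed.

Section Counterexample.
Variables beta1 beta2 : R.
Hypothesis Hbeta1 : 0 <= beta1 < 1.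
Hypothesis Hbeta2 : 0 <= beta2 < 1.
Hypothesis Hbeta : beta1 < sqrt beta2.

(* Weight of the momentum in the potential, kappa = beta1 / (1 - beta1). *)
Definition kappa : R := beta1 / (1 - beta1).
(* Contraction factor of |m| / sqrt v along the run; rho < 1 is the hypothesis. *)
Definition rho : R := beta1 / sqrt beta2.
(* Invariant bound |m_t| <= Rm sqrt v_t. *)
Definition Rm : R := (1 - beta1) / (sqrt (1 - beta2) * (1 - rho)).
(* Weights of the logarithmic and linear terms in the potential. *)
Definition lam : R := kappa * Rm / beta2 + 1.
Definition mu : R := kappa * Rm / (1 - beta2).
(* Guaranteed drift of a step with gradient -1. *)
Definition gain : R := Rmin (1/2) (ln (4 / (1 + 3 * beta2)) / 2).
(* The drift of a step with gradient C is >= - (base_loss + lam ln C). *)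
Definition base_loss : R := 1 / sqrt (1 - beta2) + kappa * Rm.
Definition Nroot : R := (2 * base_loss + 4 * lam) / gain + 1.
(* The large gradient, C = Nroot^2, chosen so that eps below is positive. *)
Definition Cgrad : R := Nroot * Nroot.
Definition loss : R := base_loss + lam * ln Cgrad.
Definition pC : R := 2 / (Cgrad + 2).
Definition pM : R := Cgrad / (Cgrad + 2).
(* Expected drift per step. *)
Definition eps : R := pM * gain - pC * loss.
Definition Dhard : distribution := [(pC, Cgrad); (pM, -1)].

Lemma beta2_pos : 0 < beta2.
Proof. destruct (Req_dec beta2 0) as [E|]; [rewrite E, sqrt_0 in Hbeta|]; lra. Qed.

Lemma sqrt_beta2_pos : 0 < sqrt beta2.
Proof. apply sqrt_lt_R0, beta2_pos. Qed.

Lemma sqrt_1_beta2_pos : 0 < sqrt (1 - beta2).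
Proof. apply sqrt_lt_R0. lra. Qed.

Lemma rho_range : 0 <= rho < 1.
Proof.
  pose proof sqrt_beta2_pos. unfold rho. split.
  - apply Rmult_le_pos; [lra|left; apply Rinv_0_lt_compat; lra].
  - apply Rmult_lt_reg_r with (sqrt beta2); auto. field_simplify; lra.
Qed.

Lemma kappa_nonneg : 0 <= kappa.
Proof. unfold kappa. apply Rmult_le_pos; [lra|left; apply Rinv_0_lt_compat; lra]. Qed.

Lemma Rm_pos : 0 < Rm.
Proof.
  pose proof rho_range. pose proof sqrt_1_beta2_pos.
  unfold Rm. apply Rdiv_lt_0_compat; [lra|]. apply Rmult_lt_0_compat; lra.
Qed.

Lemma lam_ge1 : 1 <= lam.
Proof.
  pose proof kappa_nonneg. pose proof Rm_pos. pose proof beta2_pos.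
  unfold lam. assert (0 <= kappa * Rm / beta2); [|lra].
  apply Rmult_le_pos; [nra|left; apply Rinv_0_lt_compat; lra].
Qed.

Lemma mu_nonneg : 0 <= mu.
Proof.
  pose proof kappa_nonneg. pose proof Rm_pos.
  unfold mu. apply Rmult_le_pos; [nra|left; apply Rinv_0_lt_compat; lra].
Qed.

Lemma gain_pos : 0 < gain.
Proof.
  pose proof beta2_pos. unfold gain. apply Rmin_glb_lt; [lra|].
  assert (0 < ln (4 / (1 + 3 * beta2))); [|lra].
  rewrite <- ln_1. apply ln_increasing; [lra|].
  apply Rmult_lt_reg_r with (1 + 3 * beta2); [lra|]. field_simplify; lra.
Qed.

Lemma base_loss_nonneg : 0 <= base_loss.
Proof.
  pose proof kappa_nonneg. pose proof Rm_pos. pose proof sqrt_1_beta2_pos.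
  unfold base_loss. assert (0 < 1 / sqrt (1 - beta2)) by (apply Rdiv_lt_0_compat; lra). nra.
Qed.

Lemma Nroot_ge1 : 1 <= Nroot.
Proof.
  pose proof base_loss_nonneg. pose proof lam_ge1. pose proof gain_pos.
  unfold Nroot. assert (0 <= (2 * base_loss + 4 * lam) / gain); [|lra].
  apply Rmult_le_pos; [lra|left; apply Rinv_0_lt_compat; lra].
Qed.

Lemma Cgrad_ge1 : 1 <= Cgrad.
Proof. pose proof Nroot_ge1. unfold Cgrad. nra. Qed.

Lemma pC_pos : 0 < pC.
Proof. pose proof Cgrad_ge1. unfold pC. apply Rdiv_lt_0_compat; lra. Qed.

Lemma pM_pos : 0 < pM.
Proof. pose proof Cgrad_ge1. unfold pM. apply Rdiv_lt_0_compat; lra. Qed.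

Lemma pC_add_pM : pC + pM = 1.
Proof. pose proof Cgrad_ge1. unfold pC, pM. field. lra. Qed.

(* eps > 0: with C = N^2, C gain grows like N^2 while 2 loss only like N. *)
Lemma eps_pos : 0 < eps.
Proof.
  pose proof base_loss_nonneg. pose proof lam_ge1. pose proof gain_pos.
  pose proof Nroot_ge1. pose proof Cgrad_ge1.
  assert (HNgain : Nroot * gain = 2 * base_loss + 4 * lam + gain)
    by (unfold Nroot; field; lra).
  assert (Hln : ln Cgrad <= 2 * Nroot).
  { unfold Cgrad. rewrite ln_mult by lra. pose proof (ln_le_sub1 Nroot). lra. }
  assert (Hmain : Cgrad * gain - 2 * loss > 0).
  { assert (lam * ln Cgrad <= lam * (2 * Nroot)) by (apply Rmult_le_compat_l; lra).
    unfold loss, Cgrad in *. nra. }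
  unfold eps, pM, pC.
  replace (Cgrad / (Cgrad + 2) * gain - 2 / (Cgrad + 2) * loss)
    with ((Cgrad * gain - 2 * loss) / (Cgrad + 2)) by (field; lra).
  apply Rdiv_lt_0_compat; lra.
Qed.

Lemma Dhard_distribution : is_distribution Dhard.
Proof.
  pose proof pC_pos. pose proof pM_pos. pose proof pC_add_pM.
  split; [repeat constructor; simpl; lra|simpl; lra].
Qed.

(* The expected loss C/(C+2) x is increasing, so 0 is its unique minimiser on [0,1]. *)
Lemma Dhard_objective x : objective Dhard x = Cgrad / (Cgrad + 2) * x.
Proof. pose proof Cgrad_ge1. unfold objective, Dhard, pC, pM. simpl. field. lra. Qed.

(* Potential on the (m, v) part of the state, bounded by Bpot on settled states. *)
Definition Hpot (st : adam_state) : R :=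
  - kappa * (st_m st / sqrt (st_v st)) - lam / 2 * ln (Rmax (st_v st) 1)
  + mu * Rmin (st_v st) 1.
Definition Bpot : R := kappa * Rm + lam * ln Cgrad + mu.

(* Drift of a transition st -> st': the (unprojected) displacement of x per
   unit step size plus the change of the potential. *)
Definition drift (st st' : adam_state) : R :=
  - (st_m st' / sqrt (st_v st')) + Hpot st' - Hpot st.

(* States reachable from (1, 0, 0): x in [0,1], v <= C^2 and |m| <= Rm sqrt v. *)
Definition admissible (st : adam_state) : Prop :=
  0 <= st_x st <= 1 /\ 0 <= st_v st <= Cgrad * Cgrad /\
  Rabs (st_m st) <= Rm * sqrt (st_v st).
(* Admissible states after at least one step, where moreover v >= 1 - beta2. *)
Definition settled (st : adam_state) : Prop :=
  admissible st /\ 1 - beta2 <= st_v st.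

Lemma Dhard_support pg : In pg Dhard -> snd pg = Cgrad \/ snd pg = -1.
Proof. intros [<-|[<-|[]]]; simpl; auto. Qed.

Variable alpha : R.
Local Notation step := (adam_step alpha beta1 beta2 0 1).

(* The
   momentum bound propagates because |m'| <= beta1 Rm sqrt v + (1-beta1)|g|
   with beta1 sqrt v = rho sqrt beta2 sqrt v <= rho sqrt v' and
   |g| <= sqrt v' / sqrt (1 - beta2). *)
Lemma step_settled k st g : admissible st -> (g = Cgrad \/ g = -1) -> settled (step k st g).
Proof.
  intros (Hx & Hv & Hm) Hg.
  pose proof beta2_pos. pose proof sqrt_1_beta2_pos. pose proof rho_range.
  pose proof Rm_pos. pose proof Cgrad_ge1.
  assert (Hg2 : 1 <= g ^ 2 <= Cgrad * Cgrad) by (destruct Hg; subst; simpl; nra).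
  assert (Hgabs : Rabs g <= Cgrad) by (destruct Hg; subst; [rewrite Rabs_right|rewrite Rabs_left]; lra).
  unfold settled, admissible. rewrite adam_step_x, adam_step_m, adam_step_v.
  set (v := st_v st) in *. set (m := st_m st) in *.
  set (v' := beta2 * v + (1 - beta2) * g ^ 2).
  assert (Hv' : 1 - beta2 <= v' <= Cgrad * Cgrad) by (unfold v'; nra).
  split; [split; [apply clamp01|split]|]; try lra.
  pose proof (sqrt_sqrt v' ltac:(lra)) as Ev'. pose proof (sqrt_sqrt v ltac:(lra)) as Ev.
  pose proof (sqrt_positivity v ltac:(lra)) as Hsv.
  assert (Hw' : 0 < sqrt v') by (apply sqrt_lt_R0; lra).
  assert (Hbw : sqrt beta2 * sqrt v <= sqrt v').
  { apply le_of_sqr_le; [lra|]. pose proof (sqrt_sqrt beta2 ltac:(lra)).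
    replace (sqrt beta2 * sqrt v * (sqrt beta2 * sqrt v))
      with ((sqrt beta2 * sqrt beta2) * (sqrt v * sqrt v)) by ring.
    unfold v' in *. nra. }
  assert (Hgw : sqrt (1 - beta2) * Rabs g <= sqrt v').
  { apply le_of_sqr_le; [lra|]. pose proof (sqrt_sqrt (1 - beta2) ltac:(lra)).
    replace (sqrt (1 - beta2) * Rabs g * (sqrt (1 - beta2) * Rabs g))
      with ((sqrt (1 - beta2) * sqrt (1 - beta2)) * (Rabs g * Rabs g)) by ring.
    rewrite <- Rabs_mult, Rabs_right by nra. unfold v' in *. simpl in *. nra. }
  assert (HRm : Rm * (1 - rho) = (1 - beta1) / sqrt (1 - beta2)) by (unfold Rm; field; lra).
  eapply Rle_trans; [apply Rabs_triang|].
  rewrite !Rabs_mult, (Rabs_right beta1), (Rabs_right (1 - beta1)) by lra.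
  assert (Hold : beta1 * Rabs m <= rho * Rm * sqrt v').
  { apply Rle_trans with (beta1 * (Rm * sqrt v)); [apply Rmult_le_compat_l; lra|].
    replace (beta1 * (Rm * sqrt v)) with (rho * Rm * (sqrt beta2 * sqrt v))
      by (unfold rho; field; lra).
    apply Rmult_le_compat_l; nra. }
  assert (Hnew : (1 - beta1) * Rabs g <= (1 - beta1) / sqrt (1 - beta2) * sqrt v').
  { apply Rmult_le_reg_r with (sqrt (1 - beta2)); auto.
    replace ((1 - beta1) / sqrt (1 - beta2) * sqrt v' * sqrt (1 - beta2))
      with ((1 - beta1) * sqrt v') by (field; lra).
    nra. }
  rewrite <- HRm in Hnew. nra.
Qed.

Lemma drift_step k st g : 0 < st_v st -> 0 < beta2 * st_v st + (1 - beta2) * g ^ 2 ->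
  let v := st_v st in let v' := beta2 * st_v st + (1 - beta2) * g ^ 2 in
  drift st (step k st g) =
  - g / sqrt v' + kappa * st_m st * (1 / sqrt v - 1 / sqrt v')
  - lam / 2 * (ln (Rmax v' 1) - ln (Rmax v 1)) + mu * (Rmin v' 1 - Rmin v 1).
Proof.
  intros Hv Hv'. cbv zeta.
  pose proof (sqrt_lt_R0 _ Hv). pose proof (sqrt_lt_R0 _ Hv').
  unfold drift, Hpot, kappa. rewrite adam_step_m, adam_step_v.
  field. repeat split; lra.
Qed.

Lemma drift_C k st : settled st -> drift st (step k st Cgrad) >= - loss.
Proof.
  intros [(Hx & Hv & Hm) Hv1].
  pose proof beta2_pos. pose proof kappa_nonneg. pose proof Rm_pos.
  pose proof lam_ge1. pose proof mu_nonneg. pose proof Cgrad_ge1.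
  assert (Hv' : 0 < beta2 * st_v st + (1 - beta2) * Cgrad ^ 2) by (simpl; nra).
  rewrite drift_step by lra.
  apply (C_step_loss kappa Rm lam mu beta2 (st_m st) (st_v st)); try lra;
    try (apply sqrt_lt_R0; lra); try (apply sqrt_sqrt; lra); auto.
Qed.

Lemma drift_M k st : settled st -> drift st (step k st (-1)) >= gain.
Proof.
  intros [(Hx & Hv & Hm) Hv1].
  pose proof beta2_pos. pose proof kappa_nonneg. pose proof Rm_pos.
  pose proof (Rmin_l (1/2) (ln (4 / (1 + 3 * beta2)) / 2)).
  assert (Hv' : 0 < beta2 * st_v st + (1 - beta2) * (-1) ^ 2) by (simpl; nra).
  rewrite drift_step by lra. cbv zeta.
  replace (beta2 * st_v st + (1 - beta2) * (-1) ^ 2) with (beta2 * st_v st + (1 - beta2)) by ring.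
  replace (- -1 / sqrt (beta2 * st_v st + (1 - beta2))) with (1 / sqrt (beta2 * st_v st + (1 - beta2)))
    by (unfold Rdiv; ring).
  set (v := st_v st) in *.
  assert (Hw : 0 < sqrt v) by (apply sqrt_lt_R0; lra).
  assert (Hw' : 0 < sqrt (beta2 * v + (1 - beta2))) by (apply sqrt_lt_R0; nra).
  destruct (Rle_lt_dec 1 v) as [Hbig|Hsmall].
  - rewrite (Rmax_left v), (Rmax_left (beta2 * v + _)), (Rmin_right v), (Rmin_right (beta2 * v + _))
      by nra.
    pose proof (minus_step_gain_large kappa Rm beta2 (st_m st) v (sqrt v) _ ltac:(lra)
      kappa_nonneg ltac:(lra) Hbig Hw Hw' (sqrt_sqrt v ltac:(lra))
      (sqrt_sqrt (beta2 * v + (1 - beta2)) ltac:(nra)) Hm).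
    assert (lam / 2 * (ln (beta2 * v + (1 - beta2)) - ln v)
            = - ((kappa * Rm / beta2 + 1) / 2 * (ln v - ln (beta2 * v + (1 - beta2)))))
      by (unfold lam; ring).
    unfold gain. lra.
  - rewrite (Rmax_right v), (Rmax_right (beta2 * v + _)), (Rmin_left v), (Rmin_left (beta2 * v + _))
      by nra.
    pose proof (minus_step_gain_small kappa Rm beta2 (st_m st) v (sqrt v) _ ltac:(lra)
      kappa_nonneg ltac:(lra) ltac:(lra) Hw Hw' (sqrt_sqrt v ltac:(lra))
      (sqrt_sqrt (beta2 * v + (1 - beta2)) ltac:(nra)) Hm).
    rewrite Rminus_diag, Rmult_0_r.
    assert (mu * (beta2 * v + (1 - beta2) - v)
            = kappa * Rm / (1 - beta2) * (beta2 * v + (1 - beta2) - v)) by (unfold mu; ring).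
    unfold gain. lra.
Qed.

Lemma expected_drift k st : settled st ->
  pC * drift st (step k st Cgrad) + pM * drift st (step k st (-1)) >= eps.
Proof.
  intros Hs. pose proof (drift_C k st Hs). pose proof (drift_M k st Hs).
  pose proof pC_pos. pose proof pM_pos. unfold eps. nra.
Qed.

Lemma Hpot_bound st : settled st -> - Bpot <= Hpot st <= Bpot.
Proof.
  intros [(Hx & Hv & Hm) Hv1].
  pose proof beta2_pos. pose proof kappa_nonneg. pose proof Rm_pos.
  pose proof lam_ge1. pose proof mu_nonneg. pose proof Cgrad_ge1.
  unfold Hpot, Bpot. set (v := st_v st) in *. set (m := st_m st) in *.
  assert (Hw : 0 < sqrt v) by (apply sqrt_lt_R0; lra).
  apply Rabs_le_between in Hm.
  assert (- Rm <= m / sqrt v <= Rm).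
  { split; apply Rmult_le_reg_r with (sqrt v); auto; field_simplify; lra. }
  assert (0 <= ln (Rmax v 1) <= 2 * ln Cgrad).
  { split; [apply ln_nonneg, Rmax_r|].
    replace (2 * ln Cgrad) with (ln (Cgrad * Cgrad)) by (rewrite ln_mult; lra).
    apply ln_le_mono; [pose proof (Rmax_r v 1); lra|]. apply Rmax_lub; nra. }
  assert (0 <= Rmin v 1 <= 1) by (split; [apply Rmin_glb; lra|apply Rmin_r]).
  split; nra.
Qed.

Hypothesis Halpha : 0 < alpha.

(* The step size alpha_{k+1} = alpha / sqrt (k+1) used at step k. *)
Definition stepsize (k : nat) : R := alpha / sqrt (INR (S k)).

Lemma stepsize_pos k : 0 < stepsize k.
Proof. apply Rdiv_lt_0_compat; auto. apply sqrt_lt_R0, lt_0_INR. lia. Qed.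

Lemma stepsize_decr k : stepsize (S k) <= stepsize k.
Proof.
  unfold stepsize, Rdiv. apply Rmult_le_compat_l; [lra|].
  apply Rinv_le_contravar; [apply sqrt_lt_R0, lt_0_INR; lia|].
  apply sqrt_le_1_alt, le_INR. lia.
Qed.

Lemma stepsize_le_alpha k : stepsize k <= alpha.
Proof.
  assert (H1 : 1 <= sqrt (INR (S k))).
  { rewrite <- sqrt_1. apply sqrt_le_1_alt. rewrite S_INR. pose proof (pos_INR k). lra. }
  unfold stepsize. apply Rmult_le_reg_r with (sqrt (INR (S k))); [lra|].
  field_simplify; nra.
Qed.

(* The Lyapunov function of the proof: Phi_k = x + alpha_k H. *)
Definition Phi (k : nat) (st : adam_state) : R := st_x st + stepsize k * Hpot st.

Lemma Phi_after_step k st g : settled st -> stepsize k * Rm <= 1/2 ->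
  (g = Cgrad \/ g = -1) ->
  Phi (S k) (step k st g) >= Phi k st - 2 * Rm * stepsize k * st_x st
     - (stepsize k - stepsize (S k)) * Bpot + stepsize k * drift st (step k st g).
Proof.
  intros Hs HaR Hg. set (st' := step k st g).
  assert (Hs' : settled st') by (apply step_settled; auto; apply Hs).
  pose proof (Hpot_bound st' Hs') as HB.
  pose proof (stepsize_pos k). pose proof (stepsize_decr k).
  destruct Hs' as [(Hx' & Hv' & Hm') Hv1'].
  pose proof beta2_pos. pose proof Rm_pos.
  assert (Hw' : 0 < sqrt (st_v st')) by (apply sqrt_lt_R0; lra).
  assert (Hr : Rabs (st_m st' / sqrt (st_v st')) <= Rm).
  { unfold Rdiv. rewrite Rabs_mult, Rabs_inv, (Rabs_right (sqrt _)) by lra.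
    apply Rmult_le_reg_r with (sqrt (st_v st')); auto. field_simplify; lra. }
  assert (Hx'eq : st_x st' = clamp 0 1 (st_x st - stepsize k * (st_m st' / sqrt (st_v st')))).
  { unfold st'. rewrite adam_step_x, adam_step_m, adam_step_v. unfold stepsize, Rdiv. f_equal. ring. }
  pose proof (clamp01_lower (st_x st) (stepsize k) _ Rm (proj1 (proj1 Hs)) Hr ltac:(lra) HaR).
  assert (stepsize (S k) * Hpot st' >= stepsize k * Hpot st' - (stepsize k - stepsize (S k)) * Bpot)
    by nra.
  unfold Phi, drift. fold st'. rewrite Hx'eq. nra.
Qed.

Lemma expected_Phi_step k st : settled st -> stepsize k * Rm <= 1/2 ->
  adam_expect alpha beta1 beta2 0 1 Dhard 1 k st (Phi (S k)) >=
  Phi k st + stepsize k * eps - 2 * Rm * stepsize k * st_x st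
  - (stepsize k - stepsize (S k)) * Bpot.
Proof.
  intros Hs HaR.
  change (adam_expect alpha beta1 beta2 0 1 Dhard 1 k st (Phi (S k)))
    with (pC * Phi (S k) (step k st Cgrad) + (pM * Phi (S k) (step k st (-1)) + 0)).
  pose proof (Phi_after_step k st Cgrad Hs HaR (or_introl eq_refl)) as HC.
  pose proof (Phi_after_step k st (-1) Hs HaR (or_intror eq_refl)) as HM.
  pose proof (expected_drift k st Hs) as Hdrift.
  pose proof pC_pos. pose proof pM_pos. pose proof pC_add_pM. pose proof (stepsize_pos k).
  set (L := Phi k st - 2 * Rm * stepsize k * st_x st - (stepsize k - stepsize (S k)) * Bpot) in *.
  assert (pC * Phi (S k) (step k st Cgrad)
          >= pC * (L + stepsize k * drift st (step k st Cgrad))) by (apply Rmult_ge_compat_l; lra).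
  assert (pM * Phi (S k) (step k st (-1))
          >= pM * (L + stepsize k * drift st (step k st (-1)))) by (apply Rmult_ge_compat_l; lra).
  assert (stepsize k * (pC * drift st (step k st Cgrad) + pM * drift st (step k st (-1)))
          >= stepsize k * eps) by (apply Rmult_ge_compat_l; lra).
  replace (Phi k st + stepsize k * eps - 2 * Rm * stepsize k * st_x st
           - (stepsize k - stepsize (S k)) * Bpot)
    with ((pC + pM) * L + stepsize k * eps) by (rewrite pC_add_pM; unfold L; ring).
  lra.
Qed.

Definition start : adam_state := (1, 0, 0).

Lemma start_admissible : admissible start.
Proof.
  pose proof Rm_pos. pose proof Cgrad_ge1.
  unfold admissible, start, st_x, st_v, st_m; simpl. rewrite sqrt_0, Rabs_R0. repeat split; nra.
Qed.

Local Notation E := (adam_expect alpha beta1 beta2 0 1 Dhard).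

(* After at least one step the state is settled, so integrands need only be
   compared on settled states. *)
Lemma expect_from_start_mono i f h : (forall st, settled st -> f st <= h st) ->
  E (S i) 0 start f <= E (S i) 0 start h.
Proof.
  intros Hfh. pose proof Dhard_distribution as [Hpos _].
  rewrite !adam_expect_succ. apply expect_grad_mono; auto.
  intros pg Hin. pose proof (Dhard_support pg Hin) as Hg.
  apply adam_expect_mono_on with (P := settled); auto.
  - intros k st pg' Hin' Hs. apply step_settled; [apply Hs|]. apply Dhard_support; auto.
  - apply step_settled; auto. apply start_admissible.
Qed.

Definition Psi (j : nat) : R := E j 0 start (Phi j).
Definition mean_x (j : nat) : R := E j 0 start st_x.

Lemma Psi_step i : stepsize (S i) * Rm <= 1/2 ->
  Psi (S (S i)) >= Psi (S i) + stepsize (S i) * eps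
     - 2 * Rm * stepsize (S i) * mean_x (S i) - (stepsize (S i) - stepsize (S (S i))) * Bpot.
Proof.
  intros HaR. unfold Psi, mean_x. rewrite adam_expect_last_step. simpl (0 + S i)%nat.
  pose proof Dhard_distribution as HD.
  set (c0 := stepsize (S i) * eps - (stepsize (S i) - stepsize (S (S i))) * Bpot).
  set (c1 := - (2 * Rm * stepsize (S i))).
  assert (Hlin : E (S i) 0 start (fun st => Phi (S i) st + (c1 * st_x st + c0)) =
                 E (S i) 0 start (Phi (S i)) + (c1 * E (S i) 0 start st_x + c0)).
  { rewrite !adam_expect_add, adam_expect_scale, adam_expect_const by auto. reflexivity. }
  assert (Hmono : E (S i) 0 start (fun st => Phi (S i) st + (c1 * st_x st + c0)) <=
                  E (S i) 0 start (fun st => E 1 (S i) st (Phi (S (S i))))).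
  { apply expect_from_start_mono. intros st Hs.
    pose proof (expected_Phi_step (S i) st Hs HaR). unfold c0, c1. lra. }
  unfold c0, c1 in *. lra.
Qed.

Lemma Psi_bounds i : - (alpha * Bpot) <= Psi (S i) <= 1 + alpha * Bpot.
Proof.
  pose proof (stepsize_pos (S i)). pose proof (stepsize_le_alpha (S i)).
  pose proof Dhard_distribution as HD. unfold Psi. split.
  - rewrite <- (adam_expect_const alpha beta1 beta2 0 1 Dhard (S i) HD 0 start (- (alpha * Bpot))).
    apply expect_from_start_mono. intros st Hs. pose proof (Hpot_bound st Hs).
    destruct Hs as [(Hx & _) _]. unfold Phi. nra.
  - rewrite <- (adam_expect_const alpha beta1 beta2 0 1 Dhard (S i) HD 0 start (1 + alpha * Bpot)).
    apply expect_from_start_mono. intros st Hs. pose proof (Hpot_bound st Hs).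
    destruct Hs as [(Hx & _) _]. unfold Phi. nra.
Qed.

(* Since x stays in [0,1], E|x - 0| is the mean iterate. *)
Lemma distance_to_zero i :
  adam_iter_expect alpha beta1 beta2 0 1 1 Dhard (S i) (fun x => Rabs (x - 0)) = mean_x (S i).
Proof.
  unfold adam_iter_expect, mean_x. fold start.
  apply Rle_antisym; apply expect_from_start_mono;
    intros st [(Hx & _) _]; rewrite Rminus_0_r, Rabs_right; lra.
Qed.

Lemma Bpot_nonneg : 0 <= Bpot.
Proof.
  pose proof kappa_nonneg. pose proof Rm_pos. pose proof lam_ge1.
  pose proof mu_nonneg. pose proof (ln_nonneg _ Cgrad_ge1).
  unfold Bpot. nra.
Qed.

Lemma stepsize_eventually_small : exists N, forall j, (N <= j)%nat -> stepsize j * Rm <= 1/2.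
Proof.
  pose proof Rm_pos.
  destruct (INR_unbounded ((2 * alpha * Rm) * (2 * alpha * Rm))) as [N HN].
  exists N. intros j Hj.
  assert (HNj : INR N <= INR (S j)) by (apply le_INR; lia).
  assert (Hs : 2 * alpha * Rm <= sqrt (INR (S j))).
  { rewrite <- (sqrt_square (2 * alpha * Rm)) by nra. apply sqrt_le_1_alt. lra. }
  assert (0 < sqrt (INR (S j))) by (apply sqrt_lt_R0, lt_0_INR; lia).
  unfold stepsize. apply Rmult_le_reg_r with (sqrt (INR (S j))); auto.
  field_simplify; lra.
Qed.

Lemma Psi_drift_near_optimum i : stepsize (S i) * Rm <= 1/2 -> mean_x (S i) <= eps / (4 * Rm) ->
  Psi (S (S i)) >= Psi (S i) + eps / 2 * stepsize (S i)
     - (stepsize (S i) - stepsize (S (S i))) * Bpot.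
Proof.
  intros HaR Hmean. pose proof (Psi_step i HaR). pose proof Rm_pos.
  pose proof (stepsize_pos (S i)).
  assert (2 * Rm * mean_x (S i) <= eps / 2).
  { apply Rmult_le_reg_r with (/ (2 * Rm)); [apply Rinv_0_lt_compat; lra|].
    replace (2 * Rm * mean_x (S i) * / (2 * Rm)) with (mean_x (S i)) by (field; lra).
    replace (eps / 2 * / (2 * Rm)) with (eps / (4 * Rm)) by (field; lra). lra. }
  assert (2 * Rm * stepsize (S i) * mean_x (S i) <= stepsize (S i) * (eps / 2)).
  { replace (2 * Rm * stepsize (S i) * mean_x (S i))
      with (stepsize (S i) * (2 * Rm * mean_x (S i))) by ring.
    apply Rmult_le_compat_l; lra. }
  lra.
Qed.

(* If E|x_n - 0| -> 0, the drift makes Psi grow like sqrt n, contradicting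
   its boundedness. *)
Lemma adam_not_convergent :
  ~ Un_cv (fun n => adam_iter_expect alpha beta1 beta2 0 1 1 Dhard n (fun x => Rabs (x - 0))) 0.
Proof.
  intros Hcv. pose proof eps_pos. pose proof Rm_pos. pose proof Bpot_nonneg.
  destruct (Hcv (eps / (4 * Rm)) ltac:(apply Rdiv_lt_0_compat; lra)) as [N2 HN2].
  destruct stepsize_eventually_small as [N1 HN1].
  set (N := S (max N1 N2)).
  assert (Hdrift : forall j, (N <= j)%nat ->
            Psi (S j) >= Psi j + eps / 2 * stepsize j - (stepsize j - stepsize (S j)) * Bpot).
  { intros [|i] Hj; [unfold N in Hj; lia|].
    apply Psi_drift_near_optimum; [apply HN1; unfold N in Hj; lia|].
    specialize (HN2 (S i) ltac:(unfold N in Hj; lia)). unfold R_dist in HN2.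
    rewrite Rminus_0_r, distance_to_zero in HN2.
    pose proof (Rle_abs (mean_x (S i))). lra. }
  pose proof (telescope_drift Psi stepsize (eps / 2) Bpot N ltac:(lra) stepsize_decr Hdrift) as Htel.
  destruct (sqrt_growth (2 * (1 + 3 * alpha * Bpot) / (eps * alpha)) N) as [M HM].
  specialize (Htel M).
  pose proof (Psi_bounds (N + M - 1)) as [_ Hup]. replace (S (N + M - 1)) with (N + M)%nat in Hup by lia.
  pose proof (Psi_bounds (N - 1)) as [Hlow _]. replace (S (N - 1)) with N in Hlow by (unfold N; lia).
  pose proof (stepsize_pos N). pose proof (stepsize_le_alpha N). pose proof (stepsize_pos (N + M)).
  assert ((stepsize N - stepsize (N + M)) * Bpot <= alpha * Bpot) by (apply Rmult_le_compat_r; lra).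
  assert (Hsum : INR M * (eps / 2) * stepsize (N + M) <= 1 + 3 * alpha * Bpot) by lra.
  unfold stepsize in Hsum.
  assert (INR M / sqrt (INR (S (N + M))) <= 2 * (1 + 3 * alpha * Bpot) / (eps * alpha)).
  { apply Rmult_le_reg_r with (eps * alpha / 2); [nra|].
    replace (2 * (1 + 3 * alpha * Bpot) / (eps * alpha) * (eps * alpha / 2))
      with (1 + 3 * alpha * Bpot) by (field; lra).
    replace (INR M / sqrt (INR (S (N + M))) * (eps * alpha / 2))
      with (INR M * (eps / 2) * (alpha / sqrt (INR (S (N + M))))) by (field; apply Rgt_not_eq, sqrt_lt_R0, lt_0_INR; lia).
    lra. }
  lra.
Qed.

End Counterexample.

Theorem theorem3 (beta1 beta2 : R)
  (Hb1 : 0 <= beta1 < 1) (Hb2 : 0 <= beta2 < 1) (Hb : beta1 < sqrt beta2) :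
  exists (a b : R) (D : distribution) (xstar x1 : R),
    a <= b /\
    is_distribution D /\
    Forall (fun pg => snd pg <> 0) D /\
    a <= x1 <= b /\
    (* xstar is the (unique) minimizer of F = E[f] over F = [a,b] *)
    (a <= xstar <= b /\ forall y, a <= y <= b -> objective D xstar <= objective D y) /\
    (forall y, a <= y <= b -> (forall z, a <= z <= b -> objective D y <= objective D z) ->
       y = xstar) /\
    forall alpha : R, 0 < alpha ->
      ~ Un_cv (fun n => adam_iter_expect alpha beta1 beta2 a b x1 D n
                          (fun x => Rabs (x - xstar))) 0.
Proof.
  pose proof (Cgrad_ge1 beta1 beta2 Hb1 Hb2 Hb) as HC.
  pose proof (Dhard_objective beta1 beta2 Hb1 Hb2 Hb) as Hobj.
  assert (Hslope : 0 < Cgrad beta1 beta2 / (Cgrad beta1 beta2 + 2))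
    by (apply Rdiv_lt_0_compat; lra).
  exists 0, 1, (Dhard beta1 beta2), 0, 1.
  split; [lra|]. split; [exact (Dhard_distribution beta1 beta2 Hb1 Hb2 Hb)|].
  split; [repeat constructor; simpl; lra|].
  split; [lra|].
  split; [split; [lra|intros y Hy; rewrite !Hobj; nra]|].
  split.
  - intros y Hy Hmin. specialize (Hmin 0 ltac:(lra)). rewrite !Hobj in Hmin. nra.
  - intros alpha Halpha. exact (adam_not_convergent beta1 beta2 Hb1 Hb2 Hb alpha Halpha).
Qed.
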